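(* Assume all thermal noise is zero ($\mathbf N_T=\mathbf 0$, $\mathbf N_D=\mathbf 0$). If the jammer is not eclipsed (in the sense of eclipsing with channel estimation defined in the context), then every minimizer $(\hat{\mathbf P},\hat{\mathbf H},\hat{\mathbf S}_D)$ of $$\min_{\tilde{\mathbf P}\in\mathscr G_{B-I}(\mathbb C^B),\ \tilde{\mathbf H}\in\mathbb C^{B\times U},\ \tilde{\mathbf S}_D\in\mathcal S^{U\times D}}\ \big\|\tilde{\mathbf P}\big([\mathbf Y_T,\mathbf Y_D]-\tilde{\mathbf H}[\mathbf S_T,\tilde{\mathbf S}_D]\big)\big\|_F^2$$ satisfies $\hat{\mathbf P}=\mathbf I_B-\mathbf J\mathbf J^\dagger$, $\hat{\mathbf P}\hat{\mathbf H}=\hat{\mathbf P}\mathbf H$, and $\hat{\mathbf S}_D=\mathbf S_D$ (and such minimizers exist).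
   Context: Let $B,U,I,T,D$ be positive integers with $B\ge U+I$ and $T\ge U$. Let $\mathcal S=\{(\pm1\pm i)/\sqrt2\}\subset\mathbb C$ (QPSK). Let $\mathbf H\in\mathbb C^{B\times U}$, $\mathbf J\in\mathbb C^{B\times I}$ with $[\mathbf H,\mathbf J]$ of full column rank $U+I$. Let $\mathbf S_T\in\mathbb C^{U\times T}$ be a pilot matrix of full row rank $U$, $\mathbf S_D\in\mathcal S^{U\times D}$, $\mathbf W_T\in\mathbb C^{I\times T}$, $\mathbf W_D\in\mathbb C^{I\times D}$, noise $\mathbf N_T,\mathbf N_D$, and $\mathbf Y_T=\mathbf H\mathbf S_T+\mathbf J\mathbf W_T+\mathbf N_T$, $\mathbf Y_D=\mathbf H\mathbf S_D+\mathbf J\mathbf W_D+\mathbf N_D$; $[\mathbf A,\mathbf B]$ is horizontal concatenation. $\mathbf A^\dagger$ is the Moore–Penrose pseudoinverse. $\mathscr G_{B-I}(\mathbb C^B)$ denotes the set of $B\times B$ orthogonal projections onto $(B-I)$-dimensional subspaces of $\mathbb C^B$. Eclipsing with channel estimation: the jammer is eclipsed if there exists $\tilde{\mathbf S}_D\in\mathcal S^{U\times D}\setminus\{\mathbf S_D\}$ such that $\begin{bmatrix}\mathbf S_D-\tilde{\mathbf S}_D\\ \mathbf W_D-\mathbf W_T\mathbf S_T^\dagger\tilde{\mathbf S}_D\end{bmatrix}$ has rank at most $I$. *)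

From HB Require Import structures.
From Stdlib Require Import ClassicalEpsilon.
From mathcomp Require Import all_boot all_order all_algebra.
From mathcomp Require Import complex.
From mathcomp Require Import reals.
Set Implicit Arguments. Unset Strict Implicit. Unset Printing Implicit Defensive.
Import Order.TTheory GRing.Theory Num.Theory.
Local Open Scope ring_scope.

Definition ctmx (C : numClosedFieldType) m n (A : 'M[C]_(m, n)) : 'M[C]_(n, m) :=
  map_mx Num.conj A^T.

Definition penrose (C : numClosedFieldType) m n (A : 'M[C]_(m, n)) (X : 'M[C]_(n, m)) : Prop :=
  [/\ A *m X *m A = A, X *m A *m X = X,
      ctmx (A *m X) = A *m X & ctmx (X *m A) = X *m A].

(* Moore--Penrose pseudoinverse: the (unique, always existing) matrix
   satisfying the Penrose conditions, picked by Hilbert's epsilon. *)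
Definition pinv (C : numClosedFieldType) m n (A : 'M[C]_(m, n)) : 'M[C]_(n, m) :=
  epsilon (inhabits 0) (penrose A).

Definition frob2 (C : numClosedFieldType) m n (A : 'M[C]_(m, n)) : C :=
  \sum_(i < m) \sum_(j < n) `|A i j| ^+ 2.

Definition qpsk (C : numClosedFieldType) (x : C) : Prop :=
  exists a b : C, (a = 1 \/ a = -1) /\ (b = 1 \/ b = -1) /\
                  x = (a + 'i * b) / sqrtC 2.

Definition qpsk_mx (C : numClosedFieldType) m n (S : 'M[C]_(m, n)) : Prop :=
  forall i j, qpsk (S i j).

(* G_k(C^B): orthogonal projections onto k-dimensional subspaces of C^B *)
Definition grass_proj (C : numClosedFieldType) (B k : nat) (P : 'M[C]_B) : Prop :=
  [/\ P *m P = P, ctmx P = P & \rank P = k].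

Definition eclipsed (C : numClosedFieldType) (U I T D : nat)
    (S_T : 'M[C]_(U, T)) (S_D : 'M[C]_(U, D))
    (W_T : 'M[C]_(I, T)) (W_D : 'M[C]_(I, D)) : Prop :=
  exists tS : 'M[C]_(U, D), qpsk_mx tS /\ tS <> S_D /\
    (\rank (col_mx (S_D - tS) (W_D - W_T *m pinv S_T *m tS)) <= I)%N.

Definition jml_obj (C : numClosedFieldType) (B U T D : nat)
    (Y : 'M[C]_(B, T + D)) (S_T : 'M[C]_(U, T))
    (P : 'M[C]_B) (H : 'M[C]_(B, U)) (S : 'M[C]_(U, D)) : C :=
  frob2 (P *m (Y - H *m row_mx S_T S)).

Definition jml_minimizer (C : numClosedFieldType) (B U I T D : nat)
    (Y : 'M[C]_(B, T + D)) (S_T : 'M[C]_(U, T))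
    (P : 'M[C]_B) (H : 'M[C]_(B, U)) (S : 'M[C]_(U, D)) : Prop :=
  [/\ grass_proj (B - I) P, qpsk_mx S &
      forall (P' : 'M[C]_B) (H' : 'M[C]_(B, U)) (S' : 'M[C]_(U, D)),
        grass_proj (B - I) P' -> qpsk_mx S' ->
        jml_obj Y S_T P H S <= jml_obj Y S_T P' H' S'].

From HB Require Import structures.
From Stdlib Require Import ClassicalEpsilon.
From mathcomp Require Import all_boot all_order all_algebra.
From mathcomp Require Import complex.
From mathcomp Require Import reals.
From mathcomp Require Import zify.
Set Implicit Arguments. Unset Strict Implicit. Unset Printing Implicit Defensive.
Import Order.TTheory GRing.Theory Num.Theory.
Local Open Scope ring_scope.

(** Without noise, [P0 := 1 - J J^+] kills the jamming term, so the true
   [(P0, H, S_D)] attains objective 0 and every minimizer has objective 0.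
   For a minimizer [(P, Hh, Sh)] the pilot columns give
   [P Hh = P (H + J W_T S_T^+)], and substituting this into the data columns
   gives [P [H, J] M = 0] with
   [M = [S_D - Sh; W_D - W_T S_T^+ Sh]].  As [P] has rank [B - I] and [[H, J]]
   is injective, [rank M <= I], which is exactly eclipsing unless [Sh = S_D].
   Then [M = [0; Z]] with [Z = W_D - W_T S_T^+ S_D], and a non-eclipsed
   jammer has [rank Z = I], so [P J = 0]; the only rank-[(B - I)] orthogonal
   projection killing [J] is [P0]. *)

Section ConjTranspose.
Variable C : numClosedFieldType.

Lemma ctmxK m n (A : 'M[C]_(m, n)) : ctmx (ctmx A) = A.
Proof. by apply/matrixP => i j; rewrite !mxE conjCK. Qed.

Lemma ctmx_mul m n p (A : 'M[C]_(m, n)) (B : 'M[C]_(n, p)) :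
  ctmx (A *m B) = ctmx B *m ctmx A.
Proof. by rewrite /ctmx trmx_mul map_mxM. Qed.

Lemma ctmxB m n (A B : 'M[C]_(m, n)) : ctmx (A - B) = ctmx A - ctmx B.
Proof. by apply/matrixP => i j; rewrite !mxE rmorphB. Qed.

Lemma ctmx1 n : ctmx (1%:M : 'M[C]_n) = 1%:M.
Proof. by rewrite /ctmx trmx1 map_mx1. Qed.

Lemma ctmx0 m n : ctmx (0 : 'M[C]_(m, n)) = 0.
Proof. by apply/matrixP => i j; rewrite !mxE rmorph0. Qed.

Lemma ctmx_inv n (A : 'M[C]_n) : ctmx (invmx A) = invmx (ctmx A).
Proof. by rewrite /ctmx trmx_inv map_invmx. Qed.

Lemma mxrank_ctmx m n (A : 'M[C]_(m, n)) : \rank (ctmx A) = \rank A.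
Proof. by rewrite /ctmx mxrank_map mxrank_tr. Qed.

Lemma mul_ctmx_eq0 m n (X : 'M[C]_(m, n)) : X *m ctmx X = 0 -> X = 0.
Proof.
move=> XX0; apply/matrixP => i j; rewrite mxE.
have /matrixP/(_ i i) := XX0; rewrite !mxE => /eqP.
under eq_bigr => k _ do rewrite !mxE.
move/eqP/(psumr_eq0P (fun k _ => mul_conjC_ge0 _))/(_ j isT).
by rewrite -normCK => /eqP; rewrite sqrf_eq0 normr_eq0 => /eqP.
Qed.

End ConjTranspose.

Section Frobenius.
Variable C : numClosedFieldType.

Lemma frob2_ge0 m n (A : 'M[C]_(m, n)) : 0 <= frob2 A.
Proof. by apply: sumr_ge0 => i _; apply: sumr_ge0 => j _; apply: exprn_ge0. Qed.

Lemma frob20 m n : frob2 (0 : 'M[C]_(m, n)) = 0.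
Proof.
by rewrite /frob2 big1 // => i _; rewrite big1 // => j _; rewrite mxE normr0 expr0n.
Qed.

Lemma frob2_eq0 m n (A : 'M[C]_(m, n)) : frob2 A = 0 -> A = 0.
Proof.
have sq_ge0 (x : C) : 0 <= `|x| ^+ 2 by apply: exprn_ge0.
move/(psumr_eq0P (fun i _ => sumr_ge0 _ (fun j _ => sq_ge0 _))) => rows0.
apply/matrixP => i j; rewrite mxE.
have /(psumr_eq0P (fun k _ => sq_ge0 _))/(_ j isT)/eqP := rows0 i isT.
by rewrite sqrf_eq0 normr_eq0 => /eqP.
Qed.

End Frobenius.

Section Pseudoinverse.
Variable C : numClosedFieldType.

Lemma col_full_linv m n (A : 'M[C]_(m, n)) :
  \rank A = n -> exists L, L *m A = 1%:M.
Proof.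
move=> rA; have /row_freeP[L AtL] : row_free A^T by rewrite /row_free mxrank_tr rA.
by exists L^T; rewrite -[A]trmxK -trmx_mul AtL trmx1.
Qed.

Lemma mxrank_mul_col_full m n p (A : 'M[C]_(m, n)) (M : 'M[C]_(n, p)) :
  \rank A = n -> \rank (A *m M) = \rank M.
Proof.
case/col_full_linv => L LA; apply/eqP; rewrite eqn_leq mxrankM_maxr /=.
by rewrite -{1}[M]mul1mx -LA -mulmxA mxrankM_maxr.
Qed.

Lemma gram_unit m n (A : 'M[C]_(m, n)) : \rank A = n -> ctmx A *m A \in unitmx.
Proof.
move=> rA; have [L LA] := col_full_linv rA.
rewrite -row_free_unit -kermx_eq0; apply/eqP.
set N := kermx _; have NAA : N *m (ctmx A *m A) = 0 by apply: mulmx_ker.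
have NA : N *m ctmx A = 0.
  by apply: mul_ctmx_eq0; rewrite ctmx_mul ctmxK mulmxA -(mulmxA N) NAA mul0mx.
have AN : A *m ctmx N = 0 by rewrite -[A]ctmxK -ctmx_mul NA ctmx0.
by rewrite -[N]ctmxK -[ctmx N]mul1mx -LA -mulmxA AN mulmx0 ctmx0.
Qed.

Lemma penrose_col_full m n (A : 'M[C]_(m, n)) : \rank A = n ->
  penrose A (invmx (ctmx A *m A) *m ctmx A).
Proof.
move=> rA; have AAu := gram_unit rA.
have XA : invmx (ctmx A *m A) *m ctmx A *m A = 1%:M by rewrite -mulmxA mulVmx.
have AAh : ctmx (ctmx A *m A) = ctmx A *m A by rewrite ctmx_mul ctmxK.
split.
- by rewrite -mulmxA XA mulmx1.
- by rewrite XA mul1mx.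
- by rewrite !ctmx_mul ctmxK ctmx_inv AAh mulmxA.
- by rewrite XA ctmx1.
Qed.

Lemma penrose_ctmx m n (A : 'M[C]_(m, n)) X :
  penrose A X -> penrose (ctmx A) (ctmx X).
Proof.
case=> AXA XAX AXh XAh; split.
- by rewrite -[in RHS]AXA !ctmx_mul mulmxA.
- by rewrite -[in RHS]XAX !ctmx_mul mulmxA.
- by rewrite -ctmx_mul XAh.
- by rewrite -ctmx_mul AXh.
Qed.

Lemma pinv_penrose m n (A : 'M[C]_(m, n)) X : penrose A X -> penrose A (pinv A).
Proof. by move=> AX; apply: epsilon_spec; exists X. Qed.

Lemma pinv_col_full m n (A : 'M[C]_(m, n)) : \rank A = n ->
  penrose A (pinv A) /\ pinv A *m A = 1%:M.
Proof.
move=> rA; have AA := pinv_penrose (penrose_col_full rA).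
split=> //; have [L LA] := col_full_linv rA; case: AA => AXA _ _ _.
by rewrite -[pinv A *m A]mul1mx -LA -mulmxA (mulmxA A) AXA.
Qed.

Lemma mul_pinv_row_full m n (A : 'M[C]_(m, n)) : \rank A = m ->
  A *m pinv A = 1%:M.
Proof.
move=> rA; have rAh : \rank (ctmx A) = m by rewrite mxrank_ctmx.
have [AXA _ _ _] : penrose A (pinv A).
  by have := penrose_ctmx (penrose_col_full rAh); rewrite ctmxK => /pinv_penrose.
have [L LAh] := col_full_linv rAh.
have ALh : A *m ctmx L = 1%:M by rewrite -[A]ctmxK -ctmx_mul LAh ctmx1.
by rewrite -[A *m pinv A]mulmx1 -ALh mulmxA AXA.
Qed.

End Pseudoinverse.

Section OrthComplementProjection.
Variables (C : numClosedFieldType) (B n : nat) (J : 'M[C]_(B, n)).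
Hypothesis rJ : \rank J = n.

Definition orth_compl_proj : 'M[C]_B := 1%:M - J *m pinv J.

Lemma orth_compl_projJ : orth_compl_proj *m J = 0.
Proof.
by rewrite mulmxBl mul1mx -mulmxA (pinv_col_full rJ).2 mulmx1 subrr.
Qed.

Lemma ctmx_orth_compl_proj : ctmx orth_compl_proj = orth_compl_proj.
Proof.
have [[_ _ JXh _] _] := pinv_col_full rJ.
by rewrite ctmxB ctmx1 JXh.
Qed.

Lemma grass_proj_orth_compl : grass_proj (B - n) orth_compl_proj.
Proof.
split; [|exact: ctmx_orth_compl_proj|].
- by rewrite {2}/orth_compl_proj mulmxBr mulmx1 mulmxA orth_compl_projJ mul0mx subr0.
- have := mulmx0_rank_max orth_compl_projJ; rewrite rJ => rank_le.
  have := mxrank_add orth_compl_proj (J *m pinv J).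
  rewrite subrK mxrank1 => /leq_trans/(_ (leq_add (leqnn _) (mxrankM_maxl J _))).
  rewrite rJ => rank_ge.
  lia.
Qed.

Lemma grass_proj_annihilator_eq (P : 'M[C]_B) :
  grass_proj (B - n) P -> P *m J = 0 -> P = orth_compl_proj.
Proof.
case=> PP Ph rP PJ; set P0 := orth_compl_proj.
have PP0 : P *m P0 = P by rewrite mulmxBr mulmx1 mulmxA PJ mul0mx subr0.
have P0P : P0 *m P = P.
  by rewrite -[P0]ctmx_orth_compl_proj -[in LHS]Ph -ctmx_mul PP0.
have [_ _ rP0] := grass_proj_orth_compl.
have PsubP0 : (P <= P0)%MS by rewrite -PP0 submxMl.
have /andP[_ /submxP[X defP0]] : (P == P0)%MS.
  by rewrite -(mxrank_leqif_eq PsubP0).2 rP rP0.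
by rewrite -P0P defP0 -mulmxA PP.
Qed.

End OrthComplementProjection.

Lemma mxrank_row_mx_le (F : fieldType) m n1 n2 (A : 'M[F]_(m, n1)) (B : 'M[F]_(m, n2)) :
  (\rank (row_mx A B) <= \rank A + \rank B)%N.
Proof.
rewrite -mxrank_tr tr_row_mx -addsmxE -(mxrank_tr A) -(mxrank_tr B).
exact: (mxrank_adds_leqif _ _).1.
Qed.

Lemma mxrank_row_mx_fullr (F : fieldType) m n1 n2 (A : 'M[F]_(m, n1)) (B : 'M[F]_(m, n2)) :
  \rank (row_mx A B) = (n1 + n2)%N -> \rank B = n2.
Proof.
move=> rAB; have := mxrank_row_mx_le A B; rewrite rAB.
have := rank_leq_col A; have := rank_leq_col B; lia.
Qed.

Section QPSK.
Variable C : numClosedFieldType.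

Lemma qpsk_neq0 (x : C) : qpsk x -> x != 0.
Proof.
case=> a [b [a_pm [b_pm ->]]].
rewrite mulf_eq0 invr_eq0 sqrtC_eq0 pnatr_eq0 orbF; apply/eqP => abi0.
have a2 : a ^+ 2 = 1 by case: a_pm => ->; rewrite ?sqrrN expr1n.
have b2 : b ^+ 2 = 1 by case: b_pm => ->; rewrite ?sqrrN expr1n.
have : ('i * b) ^+ 2 = a ^+ 2 by rewrite -(addr0_eq abi0) sqrrN.
move=> /eqP; rewrite exprMn sqrCi a2 b2 mulr1 eq_sym -subr_eq0 opprK.
by rewrite -mulr2n pnatr_eq0.
Qed.

Lemma qpskN (x : C) : qpsk x -> qpsk (- x).
Proof.
case=> a [b [a_pm [b_pm ->]]]; exists (- a), (- b); split; last split.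
- by case: a_pm => ->; rewrite ?opprK; [right | left].
- by case: b_pm => ->; rewrite ?opprK; [right | left].
- by rewrite -mulNr opprD mulrN.
Qed.

(* Negating the entry [(i0, j0)] of [S_D] is a rank-one change keeping it
   QPSK, so [rank Z < I] would make the jammer eclipsed. *)
Lemma not_eclipsed_rank U I T D (S_T : 'M[C]_(U, T)) (S_D : 'M[C]_(U, D))
    (W_T : 'M[C]_(I, T)) (W_D : 'M[C]_(I, D)) :
  (0 < U)%N -> (0 < D)%N -> qpsk_mx S_D -> ~ eclipsed S_T S_D W_T W_D ->
  \rank (W_D - W_T *m pinv S_T *m S_D) = I.
Proof.
move=> U_gt0 D_gt0 S_D_qpsk not_ecl; set G := W_T *m pinv S_T.
set Z := W_D - G *m S_D.
apply/eqP; rewrite eqn_leq rank_leq_row /= leqNgt.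
apply/negP => rZ_lt; apply: not_ecl.
pose i0 : 'I_U := Ordinal U_gt0; pose j0 : 'I_D := Ordinal D_gt0.
pose E : 'M[C]_(U, D) := (S_D i0 j0 *+ 2) *: delta_mx i0 j0.
exists (S_D - E); split; last split.
- move=> i j; rewrite /E !mxE.
  case: (eqVneq i i0) => [->|_]; case: (eqVneq j j0) => [->|_];
    rewrite ?mulr1 ?mulr0 ?subr0 //.
  by rewrite mulr2n opprD addrA subrr add0r; apply: qpskN.
- move/matrixP/(_ i0 j0)/eqP; rewrite /E !mxE !eqxx mulr1 -subr_eq0 addrAC subrr.
  rewrite add0r oppr_eq0 -mulr_natr mulf_eq0 pnatr_eq0 orbF.
  exact/negP/qpsk_neq0.
- have -> : col_mx (S_D - (S_D - E)) (W_D - G *m (S_D - E)) =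
            col_mx 0 1%:M *m Z + col_mx 1%:M G *m E.
    rewrite !mul_col_mx mul0mx !mul1mx add_col_mx add0r opprB addrC subrK.
    by rewrite mulmxBr opprB addrA addrAC.
  apply: leq_trans (mxrank_add _ _) (leq_trans _ rZ_lt).
  rewrite -addn1; apply: leq_add; first exact: mxrankM_maxr.
  apply: leq_trans (mxrankM_maxr _ _) _.
  by apply: leq_trans (mxrank_scale _ _) _; rewrite mxrank_delta.
Qed.

End QPSK.

Section NoiselessModel.
Variables (C : numClosedFieldType) (B U I T D : nat).
Variables (H : 'M[C]_(B, U)) (J : 'M[C]_(B, I)).
Variables (S_T : 'M[C]_(U, T)) (S_D : 'M[C]_(U, D)).
Variables (W_T : 'M[C]_(I, T)) (W_D : 'M[C]_(I, D)).

Let Y := row_mx (H *m S_T + J *m W_T) (H *m S_D + J *m W_D).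

Lemma jml_obj_truth (P : 'M[C]_B) : P *m J = 0 -> jml_obj Y S_T P H S_D = 0.
Proof.
move=> PJ; rewrite /jml_obj.
have -> : Y - H *m row_mx S_T S_D = J *m row_mx W_T W_D.
  rewrite /Y !mul_mx_row opp_row_mx add_row_mx.
  by rewrite (addrC (H *m S_T)) (addrC (H *m S_D)) !addrK.
by rewrite mulmxA PJ mul0mx frob20.
Qed.

Lemma jml_obj_eq0 (P : 'M[C]_B) Hh Sh : jml_obj Y S_T P Hh Sh = 0 ->
  P *m Hh *m S_T = P *m (H *m S_T + J *m W_T) /\
  P *m Hh *m Sh = P *m (H *m S_D + J *m W_D).
Proof.
move/frob2_eq0; rewrite /Y mul_mx_row opp_row_mx add_row_mx mul_mx_row -row_mx0.
case/eq_row_mx => /eqP fitT /eqP fitD.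
by rewrite -!mulmxA; split; apply/eqP; rewrite eq_sym -subr_eq0 -mulmxBr;
  [exact: fitT | exact: fitD].
Qed.

Hypothesis rS_T : \rank S_T = U.

Lemma jml_obj_eq0_channel (P : 'M[C]_B) Hh Sh : jml_obj Y S_T P Hh Sh = 0 ->
  P *m Hh = P *m (H + J *m W_T *m pinv S_T).
Proof.
case/jml_obj_eq0 => fitT _.
rewrite -[P *m Hh]mulmx1 -(mul_pinv_row_full rS_T) mulmxA fitT -mulmxA mulmxDl.
by rewrite -mulmxA (mul_pinv_row_full rS_T) mulmx1.
Qed.

Lemma jml_obj_eq0_data (P : 'M[C]_B) Hh Sh : jml_obj Y S_T P Hh Sh = 0 ->
  P *m (row_mx H J *m col_mx (S_D - Sh) (W_D - W_T *m pinv S_T *m Sh)) = 0.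
Proof.
move=> obj0; have [_ fitD] := jml_obj_eq0 obj0.
rewrite (jml_obj_eq0_channel obj0) in fitD.
have -> : row_mx H J *m col_mx (S_D - Sh) (W_D - W_T *m pinv S_T *m Sh) =
          (H *m S_D + J *m W_D) - (H + J *m W_T *m pinv S_T) *m Sh.
  by rewrite mul_row_col mulmxDl !mulmxBr !mulmxA addrACA opprD.
by rewrite mulmxBr mulmxA fitD subrr.
Qed.

Hypothesis rHJ : \rank (row_mx H J) = (U + I)%N.

Lemma jml_obj_eq0_rank (P : 'M[C]_B) Hh Sh :
  grass_proj (B - I) P -> jml_obj Y S_T P Hh Sh = 0 ->
  (\rank (col_mx (S_D - Sh) (W_D - W_T *m pinv S_T *m Sh)) <= I)%N.
Proof.
case=> _ _ rP /jml_obj_eq0_data/mulmx0_rank_max.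
by rewrite rP (mxrank_mul_col_full _ rHJ); lia.
Qed.

Hypotheses (U_gt0 : (0 < U)%N) (D_gt0 : (0 < D)%N) (S_D_qpsk : qpsk_mx S_D).
Hypothesis not_ecl : ~ eclipsed S_T S_D W_T W_D.

Lemma jml_obj_eq0_identifiable (P : 'M[C]_B) Hh Sh :
  grass_proj (B - I) P -> jml_obj Y S_T P Hh Sh = 0 -> qpsk_mx Sh ->
  [/\ Sh = S_D, P *m J = 0 & P *m Hh = P *m H].
Proof.
move=> gP obj0 Sh_qpsk; have rM := jml_obj_eq0_rank gP obj0.
have Sh_eq : Sh = S_D.
  by case: (eqVneq Sh S_D) => // /eqP Sh_neq; case: not_ecl; exists Sh.
have [Z' ZZ'] : exists Z', (W_D - W_T *m pinv S_T *m S_D) *m Z' = 1%:M.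
  by apply/row_freeP; rewrite /row_free not_eclipsed_rank.
have PJ : P *m J = 0.
  have := jml_obj_eq0_data obj0.
  rewrite Sh_eq subrr mul_row_col mulmx0 add0r mulmxA => PJZ.
  by rewrite -[P *m J]mulmx1 -ZZ' mulmxA PJZ mul0mx.
split=> //.
by rewrite (jml_obj_eq0_channel obj0) !mulmxDr !mulmxA PJ !mul0mx addr0.
Qed.

End NoiselessModel.

Theorem theorem6 (R : realType) (B U I T D : nat)
    (H : 'M[R[i]]_(B, U)) (J : 'M[R[i]]_(B, I))
    (S_T : 'M[R[i]]_(U, T)) (S_D : 'M[R[i]]_(U, D))
    (W_T : 'M[R[i]]_(I, T)) (W_D : 'M[R[i]]_(I, D)) :
  (0 < B)%N -> (0 < U)%N -> (0 < I)%N -> (0 < T)%N -> (0 < D)%N ->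
  (U + I <= B)%N -> (U <= T)%N ->
  \rank (row_mx H J) = (U + I)%N ->
  \rank S_T = U ->
  qpsk_mx S_D ->
  ~ eclipsed S_T S_D W_T W_D ->
  let Y := row_mx (H *m S_T + J *m W_T) (H *m S_D + J *m W_D) in
  (exists (P : 'M[R[i]]_B) (Hh : 'M[R[i]]_(B, U)) (Sh : 'M[R[i]]_(U, D)),
      jml_minimizer I Y S_T P Hh Sh) /\
  (forall (P : 'M[R[i]]_B) (Hh : 'M[R[i]]_(B, U)) (Sh : 'M[R[i]]_(U, D)),
      jml_minimizer I Y S_T P Hh Sh ->
      [/\ P = 1%:M - J *m pinv J, P *m Hh = P *m H & Sh = S_D]).
Proof.
move=> _ U_gt0 _ _ D_gt0 _ _ rHJ rS_T S_D_qpsk not_ecl Y.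
have rJ := mxrank_row_mx_fullr rHJ.
have P0_grass := grass_proj_orth_compl rJ.
have obj0 := jml_obj_truth H S_T S_D W_T W_D (orth_compl_projJ rJ).
split.
  exists (orth_compl_proj J), H, S_D; split; [exact: P0_grass | exact: S_D_qpsk |].
  by move=> P' H' S' _ _; rewrite /Y obj0; apply: frob2_ge0.
move=> P Hh Sh [P_grass Sh_qpsk minimal].
have objP : jml_obj Y S_T P Hh Sh = 0.
  apply/le_anti; rewrite frob2_ge0 andbT -obj0; exact: minimal.
have [Sh_eq PJ PHh] := jml_obj_eq0_identifiable rS_T rHJ U_gt0 D_gt0 S_D_qpsk
  not_ecl P_grass objP Sh_qpsk.
by split; [exact: grass_proj_annihilator_eq | |].
Qed.
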